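(* Let $\Gamma$ be a compact group, let $\Lambda$ be a finite index set, and for each $\lambda\in\Lambda$ let $\rho_\lambda:\Gamma\to O(V_\lambda)$ be a real irreducible orthogonal representation on a space $V_\lambda$ of dimension $d_\lambda$, with $\mathrm{End}_\Gamma(V_\lambda)=\mathbb{R}$. Let $V=\bigoplus_{\lambda}\mathbb{R}^{m_\lambda}\otimes V_\lambda$ and $V'=\bigoplus_\lambda\mathbb{R}^{n_\lambda}\otimes V_\lambda$, with $\Gamma$ acting by $\bigoplus_\lambda I_{m_\lambda}\otimes\rho_\lambda$ and $\bigoplus_\lambda I_{n_\lambda}\otimes\rho_\lambda$ respectively. For matrices $G_\lambda\in\mathbb{R}^{n_\lambda\times m_\lambda}$ let \[ G=\bigoplus_\lambda G_\lambda\otimes I_{V_\lambda} \] (a block-diagonal matrix in a basis adapted to these decompositions), and define $\operatorname{polar}_{\mathrm{block}}(G):=\bigoplus_\lambda\operatorname{polar}(G_\lambda)\otimes I_{V_\lambda}$. Then $\operatorname{polar}_{\mathrm{block}}(G)$ is a $\Gamma$-equivariant linear map $V\to V'$, and it coincides with the ordinary polar factor $\operatorname{polar}(G)$ of the full matrix $G$. Moreover, the same identity holds for the Newton--Schulz iteration in exact arithmetic with a common normalisation: for every integer $k\ge0$ and every scalar $s>0$, \[ T^{k}(G/s)=\bigoplus_\lambda T^{k}(G_\lambda/s)\otimes I_{V_\lambda}, \] and this matrix is again $\Gamma$-equivariant; in particular, taking $s=\|G\|_\mathrm{F}$, $\mathrm{NS}_k(G)$ equals the block-wise iteration applied to each $G_\lambda$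 with the shared normalisation $\|G\|_\mathrm{F}$.
   Context: $O(V_\lambda)$ is the orthogonal group of the inner-product space $V_\lambda$; $\otimes$ denotes the Kronecker/tensor product and $I_{V_\lambda}$ the identity on $V_\lambda$. For a real matrix $M$ with compact singular value decomposition $M=U\Sigma V^\top$ (keeping only nonzero singular values; $U,V$ with orthonormal columns, $\Sigma$ positive diagonal), $\operatorname{polar}(M):=UV^\top$ (with $\operatorname{polar}(0)=0$). Newton--Schulz: fix real $a,b,c$, $p(t)=a+bt+ct^2$ as a matrix polynomial, $T(X):=X\,p(X^\top X)$, $T^k$ its $k$-fold iterate; $\mathrm{NS}_k(M):=T^k(M/\|M\|_\mathrm{F})$ for nonzero $M$, computed in exact arithmetic. *)

From HB Require Import structures.
From mathcomp Require Import all_boot all_order all_algebra.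
From mathcomp Require Import all_classical all_reals all_analysis.
From mathcomp Require Import mxtens.

Set Implicit Arguments.
Unset Strict Implicit.
Unset Printing Implicit Defensive.

Import Order.TTheory GRing.Theory Num.Theory.
Import numFieldNormedType.Exports.
Local Open Scope ring_scope.
Local Open Scope classical_set_scope.

Definition compact_group (Gam : topologicalType)
  (mul : Gam -> Gam -> Gam) (inv : Gam -> Gam) (e : Gam) : Prop :=
  (forall x y z, mul x (mul y z) = mul (mul x y) z) /\
  (forall x, mul e x = x /\ mul x e = x) /\
  (forall x, mul (inv x) x = e /\ mul x (inv x) = e) /\
  continuous (fun p : Gam * Gam => mul p.1 p.2) /\ continuous inv /\
  compact [set: Gam] /\ hausdorff_space Gam.

Definition orth_rep (R : realType) (Gam : topologicalType)
  (mul : Gam -> Gam -> Gam) (e : Gam) (d : nat) (rho : Gam -> 'M[R]_d) : Prop :=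
  [/\ rho e = 1%:M,
      (forall g h, rho (mul g h) = rho g *m rho h),
      (forall g, rho g *m (rho g)^T = 1%:M) & continuous rho].

(* Irreducibility: V <> 0 and the only subspaces of R^d stable under all rho g *)
(* are 0 and R^d.  A subspace is the row space of U; v |-> rho g v becomes    *)
(* u |-> u *m (rho g)^T on row vectors.                                       *)
Definition irreducible_rep (R : realType) (Gam : Type) (d : nat)
  (rho : Gam -> 'M[R]_d) : Prop :=
  (0 < d)%N /\
  forall U : 'M[R]_d, (forall g, (U *m (rho g)^T <= U)%MS) ->
    U = 0 \/ row_full U.

Definition endo_trivial (R : realType) (Gam : Type) (d : nat)
  (rho : Gam -> 'M[R]_d) : Prop :=
  forall A : 'M[R]_d, (forall g, A *m rho g = rho g *m A) -> exists c : R, A = c%:M.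

Definition blkdiag (R : realType) (L : nat) (p q : 'I_L -> nat)
  (B : forall i, 'M[R]_(p i, q i)) : 'M[R]_(\sum_i p i, \sum_i q i) :=
  \mxblock_(i < L, j < L) (if i == j then conform_mx 0 (B i) else 0).

Definition frob (R : realType) (m n : nat) (M : 'M[R]_(m, n)) : R :=
  Num.sqrt (\sum_(i < m) \sum_(j < n) M i j ^+ 2).

(* P is U V^T for a compact SVD M = U Sigma V^T: U, V with orthonormal        *)
(* columns, Sigma = diag(S) with S positive (r may be 0, giving polar 0 = 0). *)
Definition is_svd_polar (R : realType) (n m : nat) (M P : 'M[R]_(n, m)) : Prop :=
  exists r : nat, exists U : 'M[R]_(n, r), exists S : 'rV[R]_r,
  exists V : 'M[R]_(m, r),
    [/\ U^T *m U = 1%:M, V^T *m V = 1%:M, (forall k, 0 < S 0 k),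
        M = U *m diag_mx S *m V^T & P = U *m V^T].

(* polar(M) := U V^T (choice of an SVD; the result does not depend on it). *)
Definition polar (R : realType) (n m : nat) (M : 'M[R]_(n, m)) : 'M[R]_(n, m) :=
  xget 0 [set P | is_svd_polar M P].

Definition NSstep (R : realType) (a b c : R) {n m : nat} (X : 'M[R]_(n, m))
  : 'M[R]_(n, m) :=
  let A := X^T *m X in
  X *m (a%:M + b *: A + c *: (A *m A)).

(* NS_k(M) = T^k(M / ||M||_F) (meaningful for M <> 0). *)
Definition NS (R : realType) (a b c : R) (k : nat) {n m : nat}
  (M : 'M[R]_(n, m)) : 'M[R]_(n, m) :=
  iter k (NSstep a b c) ((frob M)^-1 *: M).

From HB Require Import structures.
From mathcomp Require Import all_boot all_order all_algebra.
From mathcomp Require Import all_classical all_reals all_analysis.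
From mathcomp Require Import mxtens complex.
Import Order.TTheory GRing.Theory Num.Theory.
Local Open Scope ring_scope.

Set Implicit Arguments.
Unset Strict Implicit.
Unset Printing Implicit Defensive.

(* On matrices of the form G = \oplus_l G_l \otimes I, transposition, products,
   sums and scalings act block by block and leave the identity factors alone.
   The Newton--Schulz step is a polynomial in X and X^T, so it preserves this
   form blockwise; and compact SVDs of the G_l, tensored with I and assembled
   block-diagonally, form a compact SVD of G.  Since U V^T does not depend on
   the compact SVD U diag(S) V^T chosen, polar G is the blockwise polar factor.
   Equivariance holds because X \otimes I commutes with I \otimes rho(g); this
   is all that is used of the representations.  Compact SVDs exist
   by the spectral theorem for real symmetric matrices. *)

Section BlockDiagonal.
Variables (R : realType) (L : nat).

Lemma eq_blkdiag (p q : 'I_L -> nat) (A B : forall i, 'M[R]_(p i, q i)) :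
  (forall i, A i = B i) -> blkdiag A = blkdiag B.
Proof. by move=> eqAB; apply/eq_mxblockP => i j; case: eqVneq => // <-; rewrite eqAB. Qed.

Lemma mul_blkdiag (p q r : 'I_L -> nat) (A : forall i, 'M[R]_(p i, q i))
    (B : forall i, 'M[R]_(q i, r i)) :
  blkdiag A *m blkdiag B = blkdiag (fun i => A i *m B i).
Proof.
rewrite /blkdiag mul_mxblock; apply/eq_mxblockP => i k.
rewrite (bigD1 i) //= big1 => [|j /negbTE nji]; last by rewrite eq_sym nji mul0mx.
rewrite eqxx conform_mx_id addr0.
by case: eqVneq => [<-|_]; rewrite ?conform_mx_id ?mulmx0.
Qed.

Lemma tr_blkdiag (p q : 'I_L -> nat) (A : forall i, 'M[R]_(p i, q i)) :
  (blkdiag A)^T = blkdiag (fun i => (A i)^T).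
Proof.
rewrite /blkdiag tr_mxblock; apply/eq_mxblockP => i k.
by rewrite eq_sym; case: eqVneq => [<-|_]; rewrite ?conform_mx_id ?trmx0.
Qed.

Lemma blkdiagD (p q : 'I_L -> nat) (A B : forall i, 'M[R]_(p i, q i)) :
  blkdiag (fun i => A i + B i) = blkdiag A + blkdiag B.
Proof.
rewrite /blkdiag -mxblockD; apply/eq_mxblockP => i k.
by case: eqVneq => [<-|_]; rewrite ?conform_mx_id ?addr0.
Qed.

Lemma blkdiag_scalar_mx (p : 'I_L -> nat) (a : R) :
  blkdiag (fun i => (a%:M : 'M[R]_(p i))) = a%:M.
Proof. exact: mxdiagZ. Qed.

Lemma blkdiagZ (p q : 'I_L -> nat) (a : R) (A : forall i, 'M[R]_(p i, q i)) :
  blkdiag (fun i => a *: A i) = a *: blkdiag A.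
Proof.
rewrite -mul_scalar_mx -(blkdiag_scalar_mx p) mul_blkdiag.
by apply: eq_blkdiag => i; rewrite mul_scalar_mx.
Qed.

End BlockDiagonal.

Section KroneckerIdentity.
Variable R : comPzRingType.

Lemma tensmxDl m n p q (A B : 'M[R]_(m, n)) (C : 'M[R]_(p, q)) :
  (A + B) *t C = A *t C + B *t C.
Proof. by apply/matrixP => i j; rewrite !mxE mulrDl. Qed.

Lemma tensmxZl m n p q (a : R) (A : 'M[R]_(m, n)) (C : 'M[R]_(p, q)) :
  (a *: A) *t C = a *: (A *t C).
Proof. by apply/matrixP => i j; rewrite !mxE mulrA. Qed.

Lemma scalar_tensmx1 m d (a : R) : (a%:M : 'M[R]_m) *t (1%:M : 'M[R]_d) = a%:M.
Proof.
apply/matrixP => i j.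
case: (mxtens_indexP i) => i0 i1; case: (mxtens_indexP j) => j0 j1.
rewrite tensmxE !mxE (inj_eq (can_inj (@mxtens_indexK _ _))) xpair_eqE.
by case: (i0 == j0); case: (i1 == j1); rewrite /= ?mulr1 ?mulr0 ?mul0r.
Qed.

Lemma tensmx1_commute m n d (X : 'M[R]_(n, m)) (r : 'M[R]_d) :
  (1%:M *t r) *m (X *t 1%:M) = (X *t 1%:M) *m (1%:M *t r).
Proof. by rewrite !tensmx_mul !mul1mx !mulmx1. Qed.

End KroneckerIdentity.

Section NewtonSchulz.
Variables (R : realType) (a b c : R).

Lemma NSstep_blkdiag L (p q : 'I_L -> nat) (B : forall i, 'M[R]_(p i, q i)) :
  NSstep a b c (blkdiag B) = blkdiag (fun i => NSstep a b c (B i)).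
Proof.
rewrite /NSstep tr_blkdiag !mul_blkdiag -(blkdiag_scalar_mx q a) -!blkdiagZ.
by rewrite -!blkdiagD mul_blkdiag.
Qed.

Lemma NSstep_tensmx1 m n d (M : 'M[R]_(m, n)) :
  NSstep a b c (M *t (1%:M : 'M[R]_d)) = NSstep a b c M *t 1%:M.
Proof.
rewrite /NSstep trmx_tens trmx1 !tensmx_mul !mulmx1.
by rewrite -(scalar_tensmx1 n d a) -!tensmxZl -!tensmxDl tensmx_mul mulmx1.
Qed.

Lemma iter_NSstep_blkdiag_tensmx1 L (d m n : 'I_L -> nat) k
    (B : forall i, 'M[R]_(n i, m i)) :
  iter k (NSstep a b c) (blkdiag (fun i => B i *t (1%:M : 'M[R]_(d i))))
  = blkdiag (fun i => iter k (NSstep a b c) (B i) *t 1%:M).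
Proof.
elim: k => //= k ->; rewrite NSstep_blkdiag.
by apply: eq_blkdiag => i; rewrite NSstep_tensmx1.
Qed.

End NewtonSchulz.

Section RealSpectral.
Variable R : rcfType.

Lemma normalize_row N (w : 'rV[R]_N) : w != 0 ->
  exists c : R, (c *: w) *m (c *: w)^T = 1%:M.
Proof.
move=> w_neq0; set s := (w *m w^T) 0 0.
have s_gt0 : 0 < s.
  have wk2 k : w 0 k * w^T k 0 = w 0 k ^+ 2 by rewrite mxE -expr2.
  rewrite /s mxE (eq_bigr _ (fun k _ => wk2 k)) lt_neqAle sumr_ge0 ?andbT; last first.
    by move=> k _; apply: sqr_ge0.
  apply: contra w_neq0 => /eqP/esym/psumr_eq0P-/(_ (fun k _ => sqr_ge0 _)) w0.
  by apply/eqP/rowP => k; apply/eqP; rewrite mxE -sqrf_eq0 w0.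
exists (Num.sqrt s)^-1.
rewrite linearZ /= -scalemxAl -scalemxAr scalerA [w *m w^T]mx11_scalar -/s.
by rewrite scale_scalar_mx -expr2 exprVn sqr_sqrtr ?ltW // mulVf ?gt_eqF.
Qed.

Lemma rank_orthonormal k N (U : 'M[R]_(k, N)) : U *m U^T = 1%:M -> \rank U = k.
Proof.
move=> UUt; apply/eqP; rewrite eqn_leq rank_leq_row /=.
by rewrite -{1}(mxrank1 R k) -UUt mxrankM_maxl.
Qed.

Lemma orthonormal_completion k N (U : 'M[R]_(k, N)) : U *m U^T = 1%:M ->
  exists j (W : 'M[R]_(j, N)), [/\ W *m W^T = 1%:M, W *m U^T = 0 & (k + j)%N = N].
Proof.
move Et: (N - k)%N => t; elim: t k U Et => [|t IH] k U Et UUt.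
  have le_kN : (k <= N)%N by rewrite -(rank_orthonormal UUt) rank_leq_col.
  exists 0%N, 0; split; [by apply/matrixP => -[] | by apply/matrixP => -[] |].
  by apply/eqP; rewrite addn0 eqn_leq le_kN -subn_eq0 Et.
have rK : \rank (kermx U^T) = t.+1.
  by rewrite mxrank_ker mxrank_tr rank_orthonormal.
have w_neq0 : nz_row (kermx U^T) != 0 by rewrite nz_row_eq0 -mxrank_eq0 rK.
have wU : nz_row (kermx U^T) *m U^T = 0.
  by have /submxP [D ->] := nz_row_sub (kermx U^T); rewrite -mulmxA mulmx_ker mulmx0.
have [c vvt] := normalize_row w_neq0.
set v := c *: _ in vvt.
have vU : v *m U^T = 0 by rewrite -scalemxAl wU scaler0.
have Uv : U *m v^T = 0 by rewrite -[U]trmxK -trmx_mul vU trmx0.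
have UvUvt : col_mx U v *m (col_mx U v)^T = 1%:M.
  by rewrite tr_col_mx mul_col_row UUt vvt vU Uv -scalar_mx_block.
have [|j [W [WWt /eqP WUv kjN]]] := IH _ _ _ UvUvt; first by rewrite subnDA Et subn1.
move: WUv; rewrite tr_col_mx mul_mx_row row_mx_eq0 => /andP[/eqP WU /eqP Wv].
have vW : v *m W^T = 0 by rewrite -[v]trmxK -trmx_mul Wv trmx0.
exists (1 + j)%N, (col_mx v W); split; last by rewrite addnA.
  by rewrite tr_col_mx mul_col_row vvt WWt vW Wv -scalar_mx_block.
by rewrite mul_col_mx vU WU col_mx0.
Qed.

(* A real symmetric matrix is hermitian over [R[i]], whose eigenvalues are real. *)
Lemma sym_eigenvalue n (A : 'M[R]_n.+1) : A^T = A -> exists x, eigenvalue A x.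
Proof.
move=> Asym; pose AC := map_mx (real_complex R) A.
have AC_herm : AC \is hermsymmx.
  apply: realsym_hermsym; last by apply/mxOverP => i j; rewrite mxE complex_real.
  apply/is_hermitianmxP; rewrite expr0 scale1r; apply/matrixP => i j.
  by rewrite !mxE -[in RHS]Asym mxE.
have /hermitian_normalmx/orthomx_spectralP AC_diag := AC_herm.
set P := spectralmx AC in AC_diag; set sp := spectral_diag AC in AC_diag.
have P_unit : P \in unitmx by apply: spectral_unit.
have AC_ev : eigenvalue AC (sp 0 0).
  apply/eigenvalueP; exists (row 0 P).
    rewrite -row_mul AC_diag !mulmxA mulmxV // mul1mx mul_diag_mx.
    by apply/rowP => j; rewrite !mxE.
  apply/eqP => P0; have /rowP/(_ 0) := congr1 (mulmx^~ (invmx P)) P0.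
  by rewrite -row_mul mulmxV // mul0mx !mxE eqxx => /eqP; rewrite oner_eq0.
have /complex_realP [x sp_x] : sp 0 0 \is Num.real.
  exact: mxOverP (hermitian_spectral_diag_real AC_herm) _ _.
by rewrite sp_x in AC_ev; exists x; rewrite -(eigenvalue_map (real_complex R) A x).
Qed.

Lemma symmetric_spectral n (A : 'M[R]_n) : A^T = A ->
  exists (Q : 'M[R]_n) (D : 'rV[R]_n), Q^T *m Q = 1%:M /\ A = Q *m diag_mx D *m Q^T.
Proof.
elim: n A => [|n IH] A Asym.
  by exists 1%:M, 0; split; [rewrite trmx1 mulmx1 | apply/matrixP => -[]].
have [x /eigenvalueP [w wA w_neq0]] := sym_eigenvalue Asym.
have [c vvt] := normalize_row w_neq0; set v := c *: w in vvt.
have vA : v *m A = x *: v by rewrite -scalemxAl wA !scalerA mulrC.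
have [j [W [WWt Wv /eqP]]] := orthonormal_completion vvt.
rewrite add1n eqSS => /eqP jn; subst j.
have vW : v *m W^T = 0 by rewrite -[v]trmxK -trmx_mul Wv trmx0.
pose P := col_mx v W.
have PPt : P *m P^T = 1%:M.
  by rewrite tr_col_mx mul_col_row vvt WWt vW Wv -scalar_mx_block.
pose B := W *m A *m W^T.
have Bsym : B^T = B by rewrite !trmx_mul trmxK Asym mulmxA.
have [Q' [D' [Q'tQ' BQ']]] := IH B Bsym.
pose Qb := block_mx (1%:M : 'M[R]_1) 0 0 Q'.
have PAPt : P *m A *m P^T = block_mx x%:M 0 0 B.
  have WAv : W *m A *m v^T = 0.
    by rewrite -mulmxA -{1}Asym -trmx_mul vA linearZ /= -scalemxAr Wv scaler0.
  rewrite tr_col_mx mul_col_mx mul_col_row vA WAv.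
  by rewrite -!(scalemxAl x v) vvt vW scaler0 scalemx1.
have QbtQb : Qb^T *m Qb = 1%:M.
  rewrite tr_block_mx !trmx0 trmx1 mulmx_block !mul0mx !mulmx0 !addr0 !add0r.
  by rewrite mulmx1 Q'tQ' scalar_mx_block.
have QbDQbt : Qb *m diag_mx (row_mx x%:M D') *m Qb^T = block_mx x%:M 0 0 B.
  rewrite diag_mx_row tr_block_mx !trmx0 trmx1 !mulmx_block.
  rewrite !mul0mx !mulmx0 !addr0 !add0r !mulmx1 !mul1mx BQ'.
  by rewrite mul0mx; congr block_mx; apply/matrixP => i k; rewrite !ord1 !mxE.
exists (P^T *m Qb), (row_mx x%:M D'); split.
  by rewrite trmx_mul trmxK mulmxA -(mulmxA _ P) PPt mulmx1 QbtQb.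
rewrite trmx_mul trmxK !mulmxA.
have -> : P^T *m Qb *m diag_mx (row_mx x%:M D') *m Qb^T *m P
          = P^T *m (P *m A *m P^T) *m P by rewrite PAPt -QbDQbt !mulmxA.
by rewrite !mulmxA (mulmx1C PPt) mul1mx -mulmxA (mulmx1C PPt) mulmx1.
Qed.

End RealSpectral.

Definition is_svd (R : numDomainType) n m r (M : 'M[R]_(n, m))
    (U : 'M[R]_(n, r)) (S : 'rV[R]_r) (V : 'M[R]_(m, r)) : Prop :=
  [/\ U^T *m U = 1%:M, V^T *m V = 1%:M, forall k, 0 < S 0 k
    & M = U *m diag_mx S *m V^T].

Lemma diag_mx_unit (R : fieldType) r (S : 'rV[R]_r) :
  (forall k, S 0 k != 0) -> diag_mx S \in unitmx.
Proof. by move=> S_neq0; rewrite unitmxE det_diag unitfE; apply/prodf_neq0 => k _. Qed.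

Section SvdUniqueness.
Variables (R : numFieldType) (n m : nat) (M : 'M[R]_(n, m)).

Lemma svd_mulmx r (U : 'M[R]_(n, r)) S V : is_svd M U S V -> M *m V = U *m diag_mx S.
Proof. by case=> _ VtV _ ->; rewrite -[LHS]mulmxA VtV mulmx1. Qed.

Lemma svd_unit r (U : 'M[R]_(n, r)) S V : is_svd M U S V -> diag_mx S \in unitmx.
Proof. by case=> _ _ S_gt0 _; apply: diag_mx_unit => k; rewrite gt_eqF. Qed.

Lemma svd_gram r (U : 'M[R]_(n, r)) S V :
  is_svd M U S V -> M^T *m M = V *m (diag_mx S *m diag_mx S) *m V^T.
Proof.
case=> UtU _ _ ->; rewrite !trmx_mul trmxK tr_diag_mx !mulmxA.
by rewrite -(mulmxA _ U^T) UtU mulmx1.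
Qed.

Lemma diag_sqr_commute r1 r2 (S1 : 'rV[R]_r1) (S2 : 'rV[R]_r2) (K : 'M[R]_(r1, r2)) :
  (forall k, 0 < S1 0 k) -> (forall k, 0 < S2 0 k) ->
  diag_mx S1 *m diag_mx S1 *m K = K *m (diag_mx S2 *m diag_mx S2) ->
  diag_mx S1 *m K = K *m diag_mx S2.
Proof.
rewrite -[_ *m _ *m K]mulmxA [K *m _]mulmxA => S1_gt0 S2_gt0 /matrixP eqK.
apply/matrixP => a b; move: (eqK a b); rewrite !mul_diag_mx !mul_mx_diag !mxE.
have [->|Kab_neq0] := eqVneq (K a b) 0; first by rewrite !mulr0 mul0r.
rewrite mulrA -expr2 -mulrA -expr2 [RHS]mulrC => /(mulIf Kab_neq0)/eqP.
rewrite eqrXn2 ?ltW // => /eqP ->; exact: mulrC.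
Qed.

Lemma svd_right_proj r1 r2 (U1 : 'M[R]_(n, r1)) S1 V1 (U2 : 'M[R]_(n, r2)) S2 V2 :
  is_svd M U1 S1 V1 -> is_svd M U2 S2 V2 -> V1 *m V1^T *m V2 = V2.
Proof.
move=> svd1 svd2; have [_ V1tV1 _ _] := svd1; have [_ V2tV2 _ _] := svd2.
set D2 := diag_mx S2 *m diag_mx S2.
have D2_unit : D2 \in unitmx by rewrite unitmx_mul (svd_unit svd2).
have gram_V2 : M^T *m M *m V2 = V2 *m D2.
  by rewrite (svd_gram svd2) -[LHS]mulmxA V2tV2 mulmx1.
have -> : V2 = M^T *m M *m V2 *m invmx D2 by rewrite gram_V2 mulmxK.
by rewrite (svd_gram svd1) !mulmxA -(mulmxA V1 V1^T V1) V1tV1 mulmx1.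
Qed.

Lemma svd_polar_unique r1 r2 (U1 : 'M[R]_(n, r1)) S1 V1 (U2 : 'M[R]_(n, r2)) S2 V2 :
  is_svd M U1 S1 V1 -> is_svd M U2 S2 V2 -> U1 *m V1^T = U2 *m V2^T.
Proof.
move=> svd1 svd2; have [_ V1tV1 S1_gt0 _] := svd1; have [_ V2tV2 S2_gt0 _] := svd2.
have U_eq r (U : 'M[R]_(n, r)) S V :
    is_svd M U S V -> U = M *m V *m invmx (diag_mx S).
  by move=> svdM; rewrite (svd_mulmx svdM) mulmxK ?(svd_unit svdM).
set K := V1^T *m V2.
have D1K : diag_mx S1 *m K = K *m diag_mx S2.
  apply: diag_sqr_commute => //.
  have := svd_gram svd1; rewrite (svd_gram svd2) => /(congr1 (fun X => V1^T *m X *m V2)).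
  by rewrite !mulmxA V1tV1 mul1mx -!mulmxA V2tV2 mulmx1 !mulmxA.
have E1K : invmx (diag_mx S1) *m K = K *m invmx (diag_mx S2).
  rewrite -{1}[K](mulmxK (svd_unit svd2)) -D1K mulmxA.
  by rewrite mulKmx ?(svd_unit svd1).
have V1t : V1^T = K *m V2^T.
  by rewrite -{1}(svd_right_proj svd2 svd1) !trmx_mul trmxK mulmxA.
rewrite (U_eq _ _ _ _ svd1) (U_eq _ _ _ _ svd2) V1t.
rewrite mulmxA -(mulmxA (M *m V1)) E1K mulmxA -(mulmxA M V1 K) /K.
by rewrite (mulmxA V1) (svd_right_proj svd1 svd2).
Qed.

End SvdUniqueness.

Lemma tr_colsub (T : Type) m n p (g : 'I_p -> 'I_n) (A : 'M[T]_(m, n)) :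
  (colsub g A)^T = rowsub g A^T.
Proof. by apply/matrixP => i j; rewrite !mxE. Qed.

Section ColumnSelection.
Variables (R : pzRingType) (m : nat).

Definition selmx (J : {set 'I_m}) : 'M[R]_(m, #|J|) := colsub enum_val 1%:M.

Lemma selmx_tr_mul (J : {set 'I_m}) : (selmx J)^T *m selmx J = 1%:M.
Proof.
rewrite tr_colsub trmx1 -mxsub_mul mul1mx; apply/matrixP => i j.
by rewrite !mxE (inj_eq enum_val_inj).
Qed.

Lemma selmx_diag (J : {set 'I_m}) (D : 'rV[R]_m) :
  (selmx J)^T *m diag_mx D *m selmx J = diag_mx (\row_j D 0 (enum_val j)).
Proof.
rewrite -mulmxA mulmx_colsub mulmx1 tr_colsub trmx1 -mxsub_mul mul1mx.
by apply/matrixP => i j; rewrite !mxE (inj_eq enum_val_inj).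
Qed.

Lemma mul_selmx_tr n (J : {set 'I_m}) (X : 'M[R]_(n, m)) :
  (forall a k, k \notin J -> X a k = 0) -> X *m selmx J *m (selmx J)^T = X.
Proof.
move=> X0; apply/matrixP => a k; rewrite mulmx_colsub mulmx1 tr_colsub trmx1 !mxE.
transitivity (\sum_(l in J) X a l * (k == l)%:R).
  by rewrite [RHS]big_enum_val; apply: eq_bigr => j _; rewrite !mxE eq_sym.
rewrite big_mkcond (bigD1 k) //= big1 => [|l /negbTE l_neq_k]; last first.
  by rewrite eq_sym l_neq_k mulr0; case: ifP.
by rewrite eqxx mulr1 addr0; case: ifP => // /negbT/X0 ->.
Qed.

End ColumnSelection.

Section SvdExistence.
Variable R : rcfType.

Lemma is_svd_mulmx_tr n m r k (X : 'M[R]_(n, m)) (U : 'M[R]_(n, r)) S V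
    (Q : 'M[R]_(k, m)) :
  Q^T *m Q = 1%:M -> is_svd X U S V -> is_svd (X *m Q^T) U S (Q *m V).
Proof.
move=> QtQ [UtU VtV S_gt0 ->]; split => //.
  by rewrite trmx_mul -mulmxA (mulmxA Q^T) QtQ mul1mx.
by rewrite trmx_mul mulmxA.
Qed.

Lemma svd_orthogonal_columns n m (X : 'M[R]_(n, m)) (D : 'rV[R]_m) :
  X^T *m X = diag_mx D -> exists r (U : 'M[R]_(n, r)) S V, is_svd X U S V.
Proof.
move=> XtX.
have D_sum k : D 0 k = \sum_a X a k ^+ 2.
  have /matrixP/(_ k k) := XtX; rewrite !mxE eqxx mulr1n => <-.
  by apply: eq_bigr => a _; rewrite mxE expr2.
have D_ge0 k : 0 <= D 0 k by rewrite D_sum sumr_ge0 // => a _; apply: sqr_ge0.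
pose J := [set k | D 0 k != 0]; pose E := selmx R J.
have XEEt : X *m E *m E^T = X.
  apply: mul_selmx_tr => a k; rewrite inE negbK D_sum => /eqP.
  move=> /(psumr_eq0P (fun a _ => sqr_ge0 (X a k)))/(_ a isT)/eqP.
  by rewrite sqrf_eq0 => /eqP.
pose S := \row_j Num.sqrt (D 0 (enum_val j : 'I_m)) : 'rV[R]_#|J|.
have S_gt0 j : 0 < S 0 j.
  by rewrite mxE sqrtr_gt0 lt_def D_ge0 andbT; have := enum_valP j; rewrite inE.
have S_unit : diag_mx S \in unitmx by apply: diag_mx_unit => j; rewrite gt_eqF.
have EtDE : E^T *m diag_mx D *m E = diag_mx S *m diag_mx S.
  rewrite selmx_diag; apply/matrixP => i j.
  by rewrite mul_diag_mx !mxE mulrnAr -expr2 sqr_sqrtr.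
exists #|J|, (X *m E *m invmx (diag_mx S)), S, E; split => //.
- rewrite !trmx_mul trmx_inv tr_diag_mx !mulmxA -(mulmxA _ X^T) XtX.
  rewrite -(mulmxA _ E^T) -(mulmxA _ (E^T *m _)) EtDE.
  by rewrite mulmxA mulVmx // mul1mx mulmxV.
- exact: selmx_tr_mul.
- by rewrite mulmxKV.
Qed.

Lemma svd_exists n m (M : 'M[R]_(n, m)) :
  exists r (U : 'M[R]_(n, r)) S V, is_svd M U S V.
Proof.
have gram_sym : (M^T *m M)^T = M^T *m M by rewrite trmx_mul trmxK.
have [Q [D [QtQ gramQ]]] := symmetric_spectral gram_sym.
have MQ_cols : (M *m Q)^T *m (M *m Q) = diag_mx D.
  by rewrite trmx_mul -mulmxA (mulmxA M^T) gramQ !mulmxA QtQ mul1mx -mulmxA QtQ mulmx1.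
have [r [U [S [V svdMQ]]]] := svd_orthogonal_columns MQ_cols.
exists r, U, S, (Q *m V).
by have := is_svd_mulmx_tr QtQ svdMQ; rewrite -mulmxA (mulmx1C QtQ) mulmx1.
Qed.

End SvdExistence.

Section PolarFactor.
Variable R : realType.

Lemma polar_svd n m r (M : 'M[R]_(n, m)) (U : 'M[R]_(n, r)) S V :
  is_svd M U S V -> polar M = U *m V^T.
Proof.
move=> svdM; have polarM : is_svd_polar M (U *m V^T).
  by case: svdM => *; exists r, U, S, V.
have [r' [U' [S' [V' [? ? ? ? polarM']]]]] :=
  xgetPex 0 (ex_intro _ _ polarM).
by rewrite /polar polarM'; apply: (svd_polar_unique _ svdM); split.
Qed.

Lemma is_svd_tensmx1 n m r d (M : 'M[R]_(n, m)) (U : 'M[R]_(n, r)) S V :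
  is_svd M U S V ->
  is_svd (M *t (1%:M : 'M[R]_d)) (U *t 1%:M) (S *t (const_mx 1 : 'rV[R]_d)) (V *t 1%:M).
Proof.
have diag_tens : diag_mx (S *t (const_mx 1 : 'rV[R]_d)) = diag_mx S *t 1%:M.
  apply/matrixP => i j.
  case: (mxtens_indexP i) => i0 i1; case: (mxtens_indexP j) => j0 j1.
  rewrite tensmxE !mxE (inj_eq (can_inj (@mxtens_indexK _ _))) xpair_eqE.
  rewrite mxtens_indexK [X in S X _]ord1 mulr1.
  by case: (i0 == j0); case: (i1 == j1); rewrite ?mulr1 ?mulr0.
case=> UtU VtV S_gt0 ->; split.
- by rewrite trmx_tens tensmx_mul UtU trmx1 mulmx1 scalar_tensmx1.
- by rewrite trmx_tens tensmx_mul VtV trmx1 mulmx1 scalar_tensmx1.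
- by move=> k; rewrite !mxE [X in S X _]ord1 mulr1.
- by rewrite diag_tens trmx_tens trmx1 !tensmx_mul !mulmx1.
Qed.

Lemma is_svd_blkdiag L (n m r : 'I_L -> nat) (M : forall i, 'M[R]_(n i, m i))
    (U : forall i, 'M[R]_(n i, r i)) (S : forall i, 'rV[R]_(r i))
    (V : forall i, 'M[R]_(m i, r i)) :
  (forall i, is_svd (M i) (U i) (S i) (V i)) ->
  is_svd (blkdiag M) (blkdiag U) (\mxrow_i S i) (blkdiag V).
Proof.
move=> svdM; split.
- rewrite tr_blkdiag mul_blkdiag -(blkdiag_scalar_mx r 1).
  by apply: eq_blkdiag => i; case: (svdM i).
- rewrite tr_blkdiag mul_blkdiag -(blkdiag_scalar_mx r 1).
  by apply: eq_blkdiag => i; case: (svdM i).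
- by move=> k; rewrite !mxE; case: (svdM (tagnat.sig1 k)).
- rewrite diag_mxrow tr_blkdiag !mul_blkdiag.
  by apply: eq_blkdiag => i; case: (svdM i).
Qed.

Lemma polar_tensmx1 n m d (M : 'M[R]_(n, m)) :
  polar (M *t (1%:M : 'M[R]_d)) = polar M *t 1%:M.
Proof.
have [r [U [S [V svdM]]]] := svd_exists M.
rewrite (polar_svd (is_svd_tensmx1 d svdM)) (polar_svd svdM).
by rewrite trmx_tens trmx1 tensmx_mul mulmx1.
Qed.

Lemma polar_blkdiag L (n m : 'I_L -> nat) (M : forall i, 'M[R]_(n i, m i)) :
  polar (blkdiag M) = blkdiag (fun i => polar (M i)).
Proof.
have svdM i : {t : {r : nat & 'M[R]_(n i, r) * 'rV[R]_r * 'M[R]_(m i, r)}%type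
               | is_svd (M i) (tagged t).1.1 (tagged t).1.2 (tagged t).2}.
  apply: cid; have [r [U [S [V svdMi]]]] := svd_exists (M i).
  by exists (existT _ r (U, S, V)).
rewrite (polar_svd (is_svd_blkdiag (fun i => svalP (svdM i)))) tr_blkdiag mul_blkdiag.
by apply: eq_blkdiag => i; rewrite (polar_svd (svalP (svdM i))).
Qed.

End PolarFactor.

Theorem mainTheorem2 (R : realType) (Gam : topologicalType)
  (mul : Gam -> Gam -> Gam) (inv : Gam -> Gam) (e : Gam)
  (HGam : compact_group mul inv e)
  (L : nat) (d m n : 'I_L -> nat)
  (rho : forall i : 'I_L, Gam -> 'M[R]_(d i))
  (Hrep : forall i, orth_rep mul e (rho i))
  (Hirr : forall i, irreducible_rep (rho i))
  (Hend : forall i, endo_trivial (rho i))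
  (Gl : forall i : 'I_L, 'M[R]_(n i, m i)) :
  let G := blkdiag (fun i => Gl i *t (1%:M : 'M[R]_(d i))) in
  let rhoV := fun g => blkdiag (fun i => (1%:M : 'M[R]_(m i)) *t rho i g) in
  let rhoV' := fun g => blkdiag (fun i => (1%:M : 'M[R]_(n i)) *t rho i g) in
  let Pblock := blkdiag (fun i => polar (Gl i) *t (1%:M : 'M[R]_(d i))) in
  [/\ (forall g, rhoV' g *m Pblock = Pblock *m rhoV g),
      polar G = Pblock,
      (forall (a b c : R) (k : nat) (s : R), 0 < s ->
         iter k (NSstep a b c) (s^-1 *: G)
           = blkdiag (fun i => iter k (NSstep a b c) (s^-1 *: Gl i)
                                 *t (1%:M : 'M[R]_(d i)))
         /\ (forall g, rhoV' g *m iter k (NSstep a b c) (s^-1 *: G)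
                       = iter k (NSstep a b c) (s^-1 *: G) *m rhoV g))
    & (forall (a b c : R) (k : nat), G != 0 ->
         NS a b c k G
           = blkdiag (fun i => iter k (NSstep a b c) ((frob G)^-1 *: Gl i)
                                 *t (1%:M : 'M[R]_(d i))))].
Proof.
move=> G rhoV rhoV' Pblock.
have equivariant (X : forall i, 'M[R]_(n i, m i)) g :
    rhoV' g *m blkdiag (fun i => X i *t 1%:M) = blkdiag (fun i => X i *t 1%:M) *m rhoV g.
  by rewrite !mul_blkdiag; apply: eq_blkdiag => i; rewrite tensmx1_commute.
have iter_NS_G a b c k s : iter k (NSstep a b c) (s^-1 *: G)
    = blkdiag (fun i => iter k (NSstep a b c) (s^-1 *: Gl i) *t 1%:M).
  rewrite -blkdiagZ; under eq_blkdiag do rewrite -tensmxZl.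
  exact: iter_NSstep_blkdiag_tensmx1.
split.
- by move=> g; apply: equivariant.
- by rewrite polar_blkdiag; apply: eq_blkdiag => i; rewrite polar_tensmx1.
- by move=> a b c k s _; split=> [|g]; rewrite iter_NS_G //; apply: equivariant.
- by move=> a b c k _; rewrite /NS iter_NS_G.
Qed.
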